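(* Let $s,t$ be positive integers with $t$ a power of $2$, $h=\log_2 t$, and $0<\varepsilon<1$. For each $j=1,\dots,h$ let $\mathcal{H}_j\subseteq[s]^{d_j}$, where $d_j=t\,2^{-j}$, be a set that intersects the set of $\varepsilon$-good level $j$ extensions of $\tau$ for every $t\times s$ red/blue matrix $M$ in which each row has at least $s/2$ red entries and every labeling $\tau$ (for $M$) that is $\varepsilon$-good up to level $j-1$. Then $\mathcal{H}=\mathcal{H}_1\times\cdots\times\mathcal{H}_h$, viewed as a set of labelings of the inner nodes of $T$ (the level-$j$ nodes, ordered left to right, receiving the labels from the $j$-th factor), is a hitting set for the family of sets of $\varepsilon$-good labelings of $T$: for every such matrix $M$, some labeling in $\mathcal{H}$ is an $\varepsilon$-good labeling of $T$ (i.e. $\varepsilon$-good up to level $h$).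
   Context: $[s]=\{1,\dots,s\}$. Cyclically shifting a row by $\sigma$ moves the entry in column $a$ to column $((a-1+\sigma)\bmod s)+1$. $T$ is a rooted plane complete binary tree with $t$ leaves (every inner node has a left and right child, all leaves at the same distance from the root); the $i$-th leaf from the left corresponds to the $i$-th row of $M$. A node is at level $j$ if its distance to the leaves is $j$ (leaves at level $0$, root at level $h$); there are $d_j$ nodes at level $j$, ordered left to right. A labeling assigns to inner nodes labels in $[s]$. For an inner node $v$ whose subtree has leaves (rows) $i,\dots,i+r-1$ and a labeling of the inner nodes of that subtree, define row shifts by: row $i$ has shift $0$, and row $q+1$ has shift equal to the shift of row $q$ plus the label of the lowest common ancestor of leaves $q$ and $q+1$. The shifted submatrix of $v$ consists of these $r$ rows each cyclically shifted by its shift; a column of it is red if all its $r$ entries are red. The labeling of the subtree of $v$ is $\varepsilon$-good if this shifted submatrix has at least $s\,((1-\varepsilon)/2)^{r}$ red columns. A labeling of $T$ is $\varepsilon$-good up to level $j$ if every subtree rooted at an inner node of level at most $j$ is $\varepsilon$-good (higher levels irrelevant); it is $\varepsilon$-good if it is $\varepsilon$-good up to level $h$. Given $\tau$ that is $\varepsilon$-good up to level $j-1$, $\sigma\in[s]^{d_j}$ is an $\varepsilon$-good level $j$ extension of $\tau$ if $\tau$ with level-$j$ nodes labeled by $\sigma$ is $\varepsilon$-good up to level $j$. *)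

From mathcomp Require Import all_boot all_order all_algebra.
Set Implicit Arguments. Unset Strict Implicit. Unset Printing Implicit Defensive.
Import Order.TTheory GRing.Theory Num.Theory.

(* Conventions:
   - t = 2^h; rows are 'I_(2^h) (row i of the paper = ordinal i-1),
     columns are 'I_s (column a of the paper = ordinal a-1).
   - M r c = true  means entry (r,c) is red.
   - A label in [s] = {1..s} is encoded by x : 'I_s, standing for val x + 1.
   - Level-j nodes are indexed k = 0 .. 2^(h-j)-1 (left to right); node (j,k)
     has leaves (rows) r with r %/ 2^j = k, i.e. k*2^j .. k*2^j+2^j-1.
   - A labeling is a function (level, node index) -> label; only the values at
     inner nodes (1 <= level <= h, index < 2^(h-level)) matter. *)

Definition labeling (s : nat) := nat -> nat -> 'I_s.

(* level of the lowest common ancestor of leaves q and q+1 (0-indexed):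
   the least j with q %/ 2^j = (q+1) %/ 2^j; the LCA is node (j, q %/ 2^j). *)
Definition lca_level (q : nat) : nat :=
  find (fun j => q %/ 2 ^ j == q.+1 %/ 2 ^ j) (iota 0 q.+2).

Definition lca_label s (L : labeling s) (q : nat) : nat :=
  (L (lca_level q) (q %/ 2 ^ lca_level q)).+1.

(* shift of row r in the subtree of node (j,k): row k*2^j has shift 0, and
   shift(q+1) = shift(q) + label(lca(q,q+1)) *)
Definition row_shift s (L : labeling s) (j k r : nat) : nat :=
  \sum_(k * 2 ^ j <= q < r) lca_label L q.

Definition shifted_red h s (M : 'I_(2 ^ h) -> 'I_s -> bool) (r : 'I_(2 ^ h))
    (sig : nat) (c : 'I_s) : bool :=
  [exists a : 'I_s, ((a + sig) %% s == c) && M r a].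

Definition red_columns h s (M : 'I_(2 ^ h) -> 'I_s -> bool) (L : labeling s)
    (j k : nat) : nat :=
  #|[set c : 'I_s | [forall r : 'I_(2 ^ h),
       (r %/ 2 ^ j == k) ==> shifted_red M r (row_shift L j k r) c]]|.

Definition node_good (R : realFieldType) (eps : R) h s
    (M : 'I_(2 ^ h) -> 'I_s -> bool) (L : labeling s) (j k : nat) : Prop :=
  (s%:R * ((1 - eps) / 2%:R) ^+ (2 ^ j) <= (red_columns M L j k)%:R)%R.

Definition good_upto (R : realFieldType) (eps : R) h s
    (M : 'I_(2 ^ h) -> 'I_s -> bool) (L : labeling s) (j : nat) : Prop :=
  forall l k, 1 <= l -> l <= j -> l <= h -> k < 2 ^ (h - l) ->
    node_good eps M L l k.

Definition extend h s (tau : labeling s) (j : nat)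
    (sigma : {ffun 'I_(2 ^ (h - j)) -> 'I_s}) : labeling s :=
  fun l k => if l == j then
               (if insub k is Some k' then sigma k' else tau l k)
             else tau l k.

Definition level_labels h s (L : labeling s) (j : nat)
    : {ffun 'I_(2 ^ (h - j)) -> 'I_s} :=
  [ffun k => L j (val k)].

Definition half_red h s (M : 'I_(2 ^ h) -> 'I_s -> bool) : Prop :=
  forall r : 'I_(2 ^ h), s <= 2 * #|[set a : 'I_s | M r a]|.

From mathcomp Require Import all_boot all_order all_algebra.

Set Implicit Arguments.
Unset Strict Implicit.
Unset Printing Implicit Defensive.

(* The hitting set is built level by level: an eps-good labeling up to level
   j - 1 is extended by a member of [H j] to one that is eps-good up to level
   j, and relabeling level j leaves the labels of all other levels untouched. *)

Section ExtendLabels.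

Variables (h s j : nat) (tau : labeling s) (sigma : {ffun 'I_(2 ^ (h - j)) -> 'I_s}).

Lemma level_labels_extend_same : level_labels h (extend tau sigma) j = sigma.
Proof. by apply/ffunP => k; rewrite ffunE /extend eqxx valK. Qed.

Lemma level_labels_extend_other l :
  l != j -> level_labels h (extend tau sigma) l = level_labels h tau l.
Proof. by move=> /negbTE ne; apply/ffunP => k; rewrite !ffunE /extend ne. Qed.

End ExtendLabels.

Section LevelwiseHitting.

Variables (R : realFieldType) (eps : R) (h s : nat).
Variable H : forall j : nat, {set {ffun 'I_(2 ^ (h - j)) -> 'I_s}}.
Variable M : 'I_(2 ^ h) -> 'I_s -> bool.

Hypothesis H_hits_extensions : forall {j}, 1 <= j -> j <= h ->
  forall {tau : labeling s}, good_upto eps M tau j.-1 ->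
  exists2 sigma, sigma \in H j & good_upto eps M (extend tau sigma) j.

Lemma hitting_labeling_upto (x0 : 'I_s) j : j <= h ->
  exists L : labeling s,
    (forall l, 1 <= l -> l <= j -> level_labels h L l \in H l) /\
    good_upto eps M L j.
Proof.
elim: j => [|j IHj] lt_jh.
  by exists (fun _ _ => x0); split=> [l|l k] l_gt0 /(leq_trans l_gt0).
have [L [L_in_H L_good]] := IHj (ltnW lt_jh).
have [sigma sigma_in_H ext_good] := H_hits_extensions (ltn0Sn j) lt_jh L_good.
exists (extend L sigma); split=> // l l_gt0 l_le_j1.
have [->|ne_l] := eqVneq l j.+1; first by rewrite level_labels_extend_same.
rewrite level_labels_extend_other //; apply: L_in_H => //.
by rewrite leq_eqVlt (negbTE ne_l) in l_le_j1.
Qed.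

End LevelwiseHitting.

Theorem proposition5 (R : realFieldType) (s h : nat) (eps : R)
  (H : forall j : nat, {set {ffun 'I_(2 ^ (h - j)) -> 'I_s}}) :
  0 < s -> (0 < eps)%R -> (eps < 1)%R ->
  (forall j, 1 <= j -> j <= h ->
     forall (M : 'I_(2 ^ h) -> 'I_s -> bool) (tau : labeling s),
       half_red M -> good_upto eps M tau j.-1 ->
       exists2 sigma, sigma \in H j & good_upto eps M (extend tau sigma) j) ->
  forall M : 'I_(2 ^ h) -> 'I_s -> bool, half_red M ->
    exists L : labeling s,
      (forall j, 1 <= j -> j <= h -> level_labels h L j \in H j) /\
      good_upto eps M L h.
Proof.
move=> s_gt0 _ _ H_hits M M_half_red.
have H_hits_M j j_gt0 j_le_h tau := H_hits j j_gt0 j_le_h M tau M_half_red.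
exact: (hitting_labeling_upto H_hits_M (Ordinal s_gt0) (leqnn h)).
Qed.
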